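(* Let $r,k\geq 2$ be integers. Then $0\in D_{r,k}$, and whenever $d,d'\in D_{r,k}$ we have $d+d'\in D_{r,k}$.
   Context: For positive integers $v,b,r,k$, a $(v,b,r,k)$-configuration is a connected bipartite graph with $v$ vertices on one side, each of degree $r$, and $b$ vertices on the other side, each of degree $k$, containing no cycle of length $4$. By convention the empty graph (with $v=b=0$) is also regarded as a configuration. A tuple $(v,b,r,k)$ is configurable if a $(v,b,r,k)$-configuration exists. Let $\mathbb{N}_0=\{0,1,2,\dots\}$ and define $$D_{r,k}=\left\{d\in\mathbb{N}_0:\left(d\tfrac{k}{\gcd(r,k)},\,d\tfrac{r}{\gcd(r,k)},\,r,\,k\right)\text{ is configurable}\right\}.$$ *)

From mathcomp Require Import all_boot.
Set Implicit Arguments. Unset Strict Implicit. Unset Printing Implicit Defensive.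

(* A bipartite graph with v "points" ('I_v) and b "blocks" ('I_b) is given by
   its incidence (adjacency) relation inc : 'I_v -> 'I_b -> bool. *)

Definition bip_adj (v b : nat) (inc : 'I_v -> 'I_b -> bool)
  : rel ('I_v + 'I_b)%type :=
  fun x y => match x, y with
             | inl p, inr B => inc p B
             | inr B, inl p => inc p B
             | _, _ => false
             end.

Definition bip_connected (v b : nat) (inc : 'I_v -> 'I_b -> bool) : Prop :=
  forall x y : ('I_v + 'I_b)%type, connect (bip_adj inc) x y.

Definition has_C4 (v b : nat) (inc : 'I_v -> 'I_b -> bool) : Prop :=
  exists (p q : 'I_v) (B B' : 'I_b),
    [/\ p != q, B != B', inc p B, inc q B & inc p B' /\ inc q B'].

Definition is_configuration (v b r k : nat) (inc : 'I_v -> 'I_b -> bool) : Prop :=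
  [/\ bip_connected inc,
      forall p : 'I_v, #|[set B | inc p B]| = r,
      forall B : 'I_b, #|[set p | inc p B]| = k
    & ~ has_C4 inc].

Definition configurable (v b r k : nat) : Prop :=
  (v = 0 /\ b = 0) \/ exists inc : 'I_v -> 'I_b -> bool, is_configuration r k inc.

Definition inD (r k d : nat) : Prop :=
  configurable (d * (k %/ gcdn r k)) (d * (r %/ gcdn r k)) r k.

From mathcomp Require Import all_boot zify.
Set Implicit Arguments. Unset Strict Implicit. Unset Printing Implicit Defensive.

(* The disjoint union of two configurations has the right degrees and no 4-cycle, but it is
   disconnected.  Pick an incidence p1 - b1 of the first one lying on a cycle (it exists
   because all degrees are at least 2) and any incidence p2 - b2 of the second one, and
   switch them to p1 - b2 and p2 - b1.  Degrees are unchanged; the new incidences join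
   vertices at distance more than 3, so no 4-cycle appears; and the cycle still joins p1
   to b1, so the switched graph is connected. *)

Lemma connect_homo (T T' : finType) (e : rel T) (e' : rel T') (f : T -> T') :
  {homo f : x y / e x y >-> e' x y} -> {homo f : x y / connect e x y >-> connect e' x y}.
Proof.
move=> fe x y /connectP [s pth ->]; elim: s x pth => [|z s IH] x /=.
  by rewrite connect0.
by case/andP => exz /IH; apply: connect_trans (connect1 (fe _ _ exz)).
Qed.

Section EdgeOnCycle.
Variables (T : finType) (e : rel T).

Definition remove_edge (a b : T) : rel T :=
  fun x y => e x y && ~~ (((x == a) && (y == b)) || ((x == b) && (y == a))).

Lemma remove_edge_sym a b : symmetric e -> symmetric (remove_edge a b).
Proof.
move=> se x y; rewrite /remove_edge se; congr (_ && ~~ _).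
by rewrite orbC (andbC (y == a)) (andbC (y == b)).
Qed.

Lemma remove_edgeC a b : remove_edge a b =2 remove_edge b a.
Proof. by move=> x y; rewrite /remove_edge orbC. Qed.

Lemma exists_maximal_path x0 :
  exists s, [/\ path e x0 s, uniq (x0 :: s) & forall w, e (last x0 s) w -> w \in x0 :: s].
Proof.
have size_le (s : seq T) : uniq s -> size s <= #|T|.
  by move/card_uniqP <-; apply: max_card.
suff ext n s : path e x0 s -> uniq (x0 :: s) -> #|T| - size s <= n ->
    exists s', [/\ path e x0 s', uniq (x0 :: s') &
                   forall w, e (last x0 s') w -> w \in x0 :: s'].
  by apply: (ext #|T| [::]); rewrite /= ?leq_subr.
elim: n s => [|n IH] s ps us hn;
  case: (pickP [pred w | e (last x0 s) w & w \notin x0 :: s]) => [w /andP [ew wn]|maxs];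
  try by exists s; split=> // w ew; apply/negPn/negP => wn; have := maxs w; rewrite /= ew wn.
all: have us' : uniq (x0 :: rcons s w) by rewrite -rcons_cons rcons_uniq wn.
all: have := size_le _ us'; rewrite /= size_rcons => hsz.
  by move: hn; rewrite leqn0 subn_eq0 => /(leq_trans hsz); lia.
by apply: (IH (rcons s w)); rewrite ?rcons_path ?ps ?size_rcons //; lia.
Qed.

Lemma exists_edge_on_cycle (x0 : T) : symmetric e -> irreflexive e ->
    (forall x, exists y1 y2, [/\ y1 != y2, e x y1 & e x y2]) ->
  exists a b, e a b /\ connect (remove_edge a b) a b.
Proof.
move=> se ie deg.
have [s [ps us mx]] := exists_maximal_path x0.
have [y1 [y2 [y12 e1 e2]]] := deg (last x0 s).
case/lastP: s ps us mx e1 e2 => [|u z] ps us mx e1 e2 /=.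
  by move/mx: (e1); rewrite inE => /eqP ez; rewrite /= -ez ie in e1.
rewrite last_rcons in mx e1 e2.
move: ps us; rewrite rcons_path -rcons_cons rcons_uniq => /andP [pu eyz] /andP [zu _].
set y := last x0 u in eyz.
(* The end z of a maximal path has a neighbour w besides its predecessor y, and w lies on
   the path, so the edge z - y closes a cycle. *)
have [w wy ezw] : exists2 w, w != y & e z w.
  by case: (eqVneq y1 y) => [eq1|]; [exists y2; rewrite // -eq1 eq_sym | exists y1].
have wu : w \in x0 :: u.
  move: (mx _ ezw); rewrite -rcons_cons mem_rcons inE => /orP [/eqP wz|//].
  by rewrite wz ie in ezw.
have pu' : path (remove_edge z y) x0 u.
  apply: (sub_in_path (P := predC1 z)); last exact: pu.
    move=> a b; rewrite !inE => az bz eab; rewrite /remove_edge eab /=.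
    by rewrite (negbTE az) (negbTE bz) andbF.
  by apply/allP => a au; rewrite !inE; apply: contraNneq zu => <-.
have csym := sym_connect_sym (remove_edge_sym z y se).
have cwy : connect (remove_edge z y) w y.
  apply: (connect_trans (y := x0)); last exact: (path_connect pu' (mem_last x0 u)).
  by rewrite csym; exact: (path_connect pu' wu).
exists z, y; split; first by rewrite se.
apply: connect_trans (connect1 _) cwy.
rewrite /remove_edge ezw (negbTE wy) andbF /=; apply/andP => -[/eqP zy _].
by rewrite zy ie in eyz.
Qed.

End EdgeOnCycle.

Lemma card_setU1D1 (T : finType) (S : {set T}) x y :
  x \in S -> y \notin S -> #|y |: (S :\ x)| = #|S|.
Proof. by move=> xS yS; rewrite cardsU1 (cardsD1 x S) xS !inE (negbTE yS) andbF. Qed.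

Lemma bip_adj_sym v b (inc : 'I_v -> 'I_b -> bool) : symmetric (bip_adj inc).
Proof. by case=> x [] y. Qed.

Lemma bip_adj_irr v b (inc : 'I_v -> 'I_b -> bool) : irreflexive (bip_adj inc).
Proof. by case. Qed.

Section Switch.
Variables (v b : nat) (inc : 'I_v -> 'I_b -> bool).
Implicit Types (p q : 'I_v) (B : 'I_b).

(* [p] and [B] are at distance more than 3 (in particular not adjacent: take [q = p]). *)
Definition far p B := forall q B', inc q B -> inc p B' -> ~~ inc q B'.

Lemma far_nonadj p B : far p B -> ~~ inc p B.
Proof. by move=> fpB; apply/negP => ipB; have := fpB p B ipB ipB; rewrite ipB. Qed.

Definition switch_core p1 b1 p2 b2 p B :=
  inc p B && ((p, B) \notin [:: (p1, b1); (p2, b2)]).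

Definition switch p1 b1 p2 b2 p B :=
  ((p, B) \in [:: (p1, b2); (p2, b1)]) || switch_core p1 b1 p2 b2 p B.

Lemma switchC p1 b1 p2 b2 : switch p1 b1 p2 b2 =2 switch p2 b2 p1 b1.
Proof.
by move=> p B; rewrite /switch /switch_core !inE (orbC (_ == (p1, b2))) (orbC (_ == (p1, b1))).
Qed.

Lemma card_switch_row1 p1 b1 p2 b2 : p1 != p2 -> inc p1 b1 -> ~~ inc p1 b2 ->
  #|[set B | switch p1 b1 p2 b2 p1 B]| = #|[set B | inc p1 B]|.
Proof.
move=> p12 i11 n12; rewrite -[RHS](@card_setU1D1 _ _ b1 b2) ?inE //.
apply: eq_card => B; rewrite /switch /switch_core !inE !xpair_eqE eqxx (negbTE p12) /=.
by case: eqP => [->|]; rewrite ?(negbTE n12) ?andbF ?orbF //= andbC.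
Qed.

Lemma card_switch_row p1 b1 p2 b2 p : p1 != p2 ->
    inc p1 b1 -> inc p2 b2 -> ~~ inc p1 b2 -> ~~ inc p2 b1 ->
  #|[set B | switch p1 b1 p2 b2 p B]| = #|[set B | inc p B]|.
Proof.
move=> p12 i11 i22 n12 n21.
case: (eqVneq p p1) => [->|pp1]; first exact: card_switch_row1.
case: (eqVneq p p2) => [->|pp2].
  rewrite -(@card_switch_row1 p2 b2 p1 b1) 1?eq_sym //.
  by apply: eq_card => B; rewrite !inE switchC.
apply: eq_card => B; rewrite /switch /switch_core !inE !xpair_eqE.
by rewrite (negbTE pp1) (negbTE pp2) andbT.
Qed.

Lemma switch_new_edge_old p1 b1 p2 b2 p B :
  (p, B) \notin [:: (p1, b2); (p2, b1)] -> switch p1 b1 p2 b2 p B -> inc p B.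
Proof. by rewrite /switch /switch_core => /negbTE -> /andP []. Qed.

Lemma switch_new_edge_no_C4 p1 b1 p2 b2 q B' : inc p1 b1 -> inc p2 b2 -> far p1 b2 ->
    q != p1 -> B' != b2 -> switch p1 b1 p2 b2 q b2 -> switch p1 b1 p2 b2 p1 B' ->
  ~~ switch p1 b1 p2 b2 q B'.
Proof.
move=> i11 i22 f12 qp1 Bb2; have n12 := far_nonadj f12.
have p12 : p1 != p2 by apply: contraNneq n12 => ->.
have b21 : b2 != b1 by apply: contraNneq n12 => ->.
rewrite /switch /switch_core !inE !xpair_eqE eqxx.
rewrite (negbTE qp1) (negbTE Bb2) (negbTE p12) (negbTE b21) /= !eqxx !andbF !andbT /=.
case: (eqVneq q p2) => [-> | _] /=; first by rewrite andbF.
by rewrite andbT => iqb2 /andP [ip1B _]; apply: (f12 _ _ iqb2 ip1B).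
Qed.

Lemma switch_C4_edge_old p1 b1 p2 b2 p q B B' :
    inc p1 b1 -> inc p2 b2 -> far p1 b2 -> far p2 b1 -> p != q -> B != B' ->
    switch p1 b1 p2 b2 p B -> switch p1 b1 p2 b2 q B ->
    switch p1 b1 p2 b2 p B' -> switch p1 b1 p2 b2 q B' ->
  inc p B.
Proof.
move=> i11 i22 f12 f21 pq BB' spB sqB spB' sqB'.
have [|old] := boolP ((p, B) \in [:: (p1, b2); (p2, b1)]); last exact: switch_new_edge_old spB.
rewrite eq_sym in pq; rewrite eq_sym in BB'.
rewrite !inE !xpair_eqE => /orP [] /andP [/eqP ep /eqP eB]; subst p B.
  by have := switch_new_edge_no_C4 i11 i22 f12 pq BB' sqB spB'; rewrite sqB'.
rewrite !(switchC p1) in sqB spB' sqB'.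
by have := switch_new_edge_no_C4 i22 i11 f21 pq BB' sqB spB'; rewrite sqB'.
Qed.

Lemma switch_no_C4 p1 b1 p2 b2 : inc p1 b1 -> inc p2 b2 -> far p1 b2 -> far p2 b1 ->
  ~ has_C4 inc -> ~ has_C4 (switch p1 b1 p2 b2).
Proof.
move=> i11 i22 f12 f21 noC4 [p [q [B [B' [pq BB' spB sqB [spB' sqB']]]]]].
have qp : q != p by rewrite eq_sym.
have B'B : B' != B by rewrite eq_sym.
have old := switch_C4_edge_old i11 i22 f12 f21.
apply: noC4; exists p, q, B, B'; split=> //.
- exact: old pq BB' spB sqB spB' sqB'.
- exact: old qp BB' sqB spB sqB' spB'.
- split; [exact: old pq B'B spB' sqB' spB sqB | exact: old qp B'B sqB' spB' sqB spB].
Qed.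

Lemma switch_connected p1 b1 p2 b2 :
    (forall x, connect (bip_adj inc) x (inl p1) \/ connect (bip_adj inc) x (inl p2)) ->
    connect (bip_adj (switch_core p1 b1 p2 b2)) (inl p1) (inr b1) ->
  bip_connected (switch p1 b1 p2 b2).
Proof.
move=> to_p12 core11.
set e := bip_adj (switch p1 b1 p2 b2).
have csym : connect_sym e := sym_connect_sym (bip_adj_sym _).
have c11 : connect e (inl p1) (inr b1).
  by apply: connect_sub core11 => -[x|x] [y|y] //= h; apply: connect1; rewrite /= /switch h orbT.
have c21 : connect e (inl p2) (inl p1).
  apply: (connect_trans (y := inr b1)); last by rewrite csym.
  by apply: connect1; rewrite /= /switch !inE eqxx orbT.
have old_edge p B : inc p B -> connect e (inl p) (inr B).
  move=> ipB; have [|] := boolP ((p, B) \in [:: (p1, b1); (p2, b2)]); last first.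
    by move=> old; apply: connect1; rewrite /= /switch /switch_core ipB old orbT.
  rewrite !inE !xpair_eqE => /orP [] /andP [/eqP -> /eqP ->] //.
  by apply: connect_trans c21 (connect1 _); rewrite /= /switch !inE eqxx.
have to_p1 x : connect e x (inl p1).
  have sub : subrel (bip_adj inc) (connect e).
    by move=> [y|y] [z|z] //= /old_edge //; rewrite csym.
  by case: (to_p12 x) => /(connect_sub sub) // /connect_trans; apply.
by move=> x y; apply: connect_trans (to_p1 x) _; rewrite csym.
Qed.

End Switch.

Lemma switch_transpose v b (inc : 'I_v -> 'I_b -> bool) p1 b1 p2 b2 p B :
  switch inc p1 b1 p2 b2 p B = switch (fun B p => inc p B) b1 p1 b2 p2 B p.
Proof.
rewrite /switch /switch_core !inE !xpair_eqE.
by case: (p == p1); case: (p == p2); case: (B == b1); case: (B == b2); rewrite //= ?orbF.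
Qed.

Lemma switch_configuration v b r k (inc : 'I_v -> 'I_b -> bool) p1 b1 p2 b2 :
    (forall p, #|[set B | inc p B]| = r) -> (forall B, #|[set p | inc p B]| = k) ->
    ~ has_C4 inc -> inc p1 b1 -> inc p2 b2 -> far inc p1 b2 -> far inc p2 b1 ->
    (forall x, connect (bip_adj inc) x (inl p1) \/ connect (bip_adj inc) x (inl p2)) ->
    connect (bip_adj (switch_core inc p1 b1 p2 b2)) (inl p1) (inr b1) ->
  is_configuration r k (switch inc p1 b1 p2 b2).
Proof.
move=> degP degB noC4 i11 i22 f12 f21 to_p12 core11.
have n12 := far_nonadj f12; have n21 := far_nonadj f21.
have p12 : p1 != p2 by apply: contraNneq n12 => ->.
have b12 : b1 != b2 by apply: contraNneq n12 => <-.
split; [exact: switch_connected | move=> p | move=> B | exact: switch_no_C4].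
  by rewrite card_switch_row.
rewrite -(degB B) -(@card_switch_row _ _ (fun B p => inc p B) b1 p1 b2 p2) //.
by apply: eq_card => p; rewrite !inE switch_transpose.
Qed.

Lemma split_lshift m n (x : 'I_m) : split (lshift n x) = inl x.
Proof. exact: (unsplitK (inl x)). Qed.

Lemma split_rshift m n (x : 'I_n) : split (rshift m x) = inr x.
Proof. exact: (unsplitK (inr x)). Qed.

Lemma card_lshift_pred m n (S : {set 'I_m}) (P : pred 'I_(m + n)) :
    (forall y, P (lshift n y) = (y \in S)) -> (forall y, P (rshift m y) = false) ->
  #|[set B | P B]| = #|S|.
Proof.
move=> Pl Pr; rewrite -(card_imset S (@lshift_inj m n)); apply: eq_card => B.
rewrite inE; case: (split_ordP B) => y ->; first by rewrite Pl mem_imset //; apply: lshift_inj.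
by rewrite Pr; apply/esym/imsetP => -[z _ /eqP]; rewrite eq_rlshift.
Qed.

Lemma card_rshift_pred m n (S : {set 'I_n}) (P : pred 'I_(m + n)) :
    (forall y, P (lshift n y) = false) -> (forall y, P (rshift m y) = (y \in S)) ->
  #|[set B | P B]| = #|S|.
Proof.
move=> Pl Pr; rewrite -(card_imset S (@rshift_inj m n)); apply: eq_card => B.
rewrite inE; case: (split_ordP B) => y ->; last by rewrite Pr mem_imset //; apply: rshift_inj.
by rewrite Pl; apply/esym/imsetP => -[z _ /eqP]; rewrite eq_lrshift.
Qed.

Section Union.
Variables (v1 b1 v2 b2 : nat) (i1 : 'I_v1 -> 'I_b1 -> bool) (i2 : 'I_v2 -> 'I_b2 -> bool).

Definition union_inc (p : 'I_(v1 + v2)) (B : 'I_(b1 + b2)) : bool :=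
  match split p, split B with
  | inl x, inl y => i1 x y
  | inr x, inr y => i2 x y
  | _, _ => false
  end.

Lemma union_inc_ll x y : union_inc (lshift v2 x) (lshift b2 y) = i1 x y.
Proof. by rewrite /union_inc !split_lshift. Qed.

Lemma union_inc_rr x y : union_inc (rshift v1 x) (rshift b1 y) = i2 x y.
Proof. by rewrite /union_inc !split_rshift. Qed.

Lemma union_inc_lr x y : union_inc (lshift v2 x) (rshift b1 y) = false.
Proof. by rewrite /union_inc split_lshift split_rshift. Qed.

Lemma union_inc_rl x y : union_inc (rshift v1 x) (lshift b2 y) = false.
Proof. by rewrite /union_inc split_lshift split_rshift. Qed.

Definition union_incE := (union_inc_ll, union_inc_rr, union_inc_lr, union_inc_rl).

Lemma card_union_row r : (forall p, #|[set B | i1 p B]| = r) ->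
  (forall p, #|[set B | i2 p B]| = r) -> forall p, #|[set B | union_inc p B]| = r.
Proof.
move=> d1 d2 p; case: (split_ordP p) => x ->.
  by rewrite -(d1 x); apply: card_lshift_pred => y; rewrite union_incE ?inE.
by rewrite -(d2 x); apply: card_rshift_pred => y; rewrite union_incE ?inE.
Qed.

Lemma card_union_col k : (forall B, #|[set p | i1 p B]| = k) ->
  (forall B, #|[set p | i2 p B]| = k) -> forall B, #|[set p | union_inc p B]| = k.
Proof.
move=> d1 d2 B; case: (split_ordP B) => y ->.
  by rewrite -(d1 y); apply: card_lshift_pred => x; rewrite union_incE ?inE.
by rewrite -(d2 y); apply: card_rshift_pred => x; rewrite union_incE ?inE.
Qed.

Lemma union_no_C4 : ~ has_C4 i1 -> ~ has_C4 i2 -> ~ has_C4 union_inc.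
Proof.
move=> n1 n2 [p [q [B [B' []]]]].
case: (split_ordP p) => x ->; case: (split_ordP q) => x' ->;
case: (split_ordP B) => y ->; case: (split_ordP B') => y' ->;
rewrite ?union_incE ?eq_shift // => pq BB' h1 h2 [h3 h4] //;
  [apply: n1 | apply: n2]; by exists x, x', y, y'.
Qed.

Lemma union_far_lr x c : far union_inc (lshift v2 x) (rshift b1 c).
Proof.
move=> q B'; case: (split_ordP q) => z ->; case: (split_ordP B') => w ->;
by rewrite ?union_incE.
Qed.

Lemma union_far_rl q y : far union_inc (rshift v1 q) (lshift b2 y).
Proof.
move=> q' B'; case: (split_ordP q') => z ->; case: (split_ordP B') => w ->;
by rewrite ?union_incE.
Qed.

Definition embed_l (x : 'I_v1 + 'I_b1) : 'I_(v1 + v2) + 'I_(b1 + b2) :=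
  match x with inl p => inl (lshift v2 p) | inr B => inr (lshift b2 B) end.

Definition embed_r (x : 'I_v2 + 'I_b2) : 'I_(v1 + v2) + 'I_(b1 + b2) :=
  match x with inl p => inl (rshift v1 p) | inr B => inr (rshift b1 B) end.

Lemma connect_embed_l :
  {homo embed_l : x y / connect (bip_adj i1) x y >-> connect (bip_adj union_inc) x y}.
Proof. by apply: connect_homo => -[x|x] [y|y] //=; rewrite union_incE. Qed.

Lemma connect_embed_r :
  {homo embed_r : x y / connect (bip_adj i2) x y >-> connect (bip_adj union_inc) x y}.
Proof. by apply: connect_homo => -[x|x] [y|y] //=; rewrite union_incE. Qed.

Lemma union_connect_components (p0 : 'I_v1) (q0 : 'I_v2) :
    bip_connected i1 -> bip_connected i2 ->
  forall x, connect (bip_adj union_inc) x (inl (lshift v2 p0)) \/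
            connect (bip_adj union_inc) x (inl (rshift v1 q0)).
Proof.
move=> c1 c2 [p|B].
  case: (split_ordP p) => z ->; [left | right].
    exact: (connect_embed_l (c1 (inl z) (inl p0))).
  exact: (connect_embed_r (c2 (inl z) (inl q0))).
case: (split_ordP B) => z ->; [left | right].
  exact: (connect_embed_l (c1 (inr z) (inl p0))).
exact: (connect_embed_r (c2 (inr z) (inl q0))).
Qed.

Lemma union_connect_core x y q0 c0 :
    connect (remove_edge (bip_adj i1) (inl x) (inr y)) (inl x) (inr y) ->
  let core := switch_core union_inc (lshift v2 x) (lshift b2 y) (rshift v1 q0) (rshift b1 c0) in
  connect (bip_adj core) (inl (lshift v2 x)) (inr (lshift b2 y)).
Proof.
apply: (connect_homo (f := embed_l)) => -[a|a] [c|c] //=;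
  rewrite /remove_edge /switch_core /= union_incE !inE !xpair_eqE !eq_shift /=.
  by [].
by move=> /andP [-> h]; rewrite orbF /= andbC.
Qed.

End Union.

Lemma configuration_void v b r k (inc : 'I_v -> 'I_b -> bool) :
  0 < k -> is_configuration r k inc -> v = 0 -> b = 0.
Proof.
move=> k_gt0 [_ _ degB _] v0; case: (posnP b) => // b0; exfalso.
have := degB (Ordinal b0); have := max_card [set p : 'I_v | inc p (Ordinal b0)].
by move=> + keq; rewrite keq card_ord; lia.
Qed.

Section Configuration.
Variables (v b r k : nat) (inc : 'I_v -> 'I_b -> bool).
Hypotheses (r2 : 2 <= r) (k2 : 2 <= k) (conf : is_configuration r k inc).

Lemma configuration_two_neighbours x :
  exists y1 y2, [/\ y1 != y2, bip_adj inc x y1 & bip_adj inc x y2].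
Proof.
case: conf => _ degP degB _; case: x => [p|B].
  have : 1 < #|[set B | inc p B]| by rewrite degP.
  by case/card_gt1P => [B [B' []]]; rewrite !inE => iB iB' BB'; exists (inr B), (inr B').
have : 1 < #|[set p | inc p B]| by rewrite degB.
by case/card_gt1P => [p [p' []]]; rewrite !inE => ip ip' pp'; exists (inl p), (inl p').
Qed.

Lemma configuration_edge_on_cycle (p0 : 'I_v) :
  exists p B, inc p B /\ connect (remove_edge (bip_adj inc) (inl p) (inr B)) (inl p) (inr B).
Proof.
have [[p|B] [[p'|B'] []]] //= := exists_edge_on_cycle (inl p0) (@bip_adj_sym _ _ inc)
  (@bip_adj_irr _ _ inc) configuration_two_neighbours.
  by move=> ipB' c; exists p, B'.
move=> ip'B c; exists p', B; split=> //.
rewrite (sym_connect_sym (remove_edge_sym _ _ (@bip_adj_sym _ _ inc))).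
by rewrite (eq_connect (remove_edgeC _ _ _)).
Qed.

End Configuration.

Lemma union_configuration v1 b1 v2 b2 r k
    (i1 : 'I_v1 -> 'I_b1 -> bool) (i2 : 'I_v2 -> 'I_b2 -> bool) :
    2 <= r -> 2 <= k -> 0 < v1 -> 0 < v2 ->
    is_configuration r k i1 -> is_configuration r k i2 ->
  exists inc : 'I_(v1 + v2) -> 'I_(b1 + b2) -> bool, is_configuration r k inc.
Proof.
move=> r2 k2 v1_gt0 v2_gt0 c1 c2.
have [x [y [ixy cycle_xy]]] := configuration_edge_on_cycle r2 k2 c1 (Ordinal v1_gt0).
have [q0 [c0 [iqc _]]] := configuration_edge_on_cycle r2 k2 c2 (Ordinal v2_gt0).
case: c1 c2 => [conn1 row1 col1 noC4_1] [conn2 row2 col2 noC4_2].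
exists (switch (union_inc i1 i2) (lshift v2 x) (lshift b2 y) (rshift v1 q0) (rshift b1 c0)).
apply: switch_configuration.
- exact: card_union_row.
- exact: card_union_col.
- exact: union_no_C4.
- by rewrite union_incE.
- by rewrite union_incE.
- exact: union_far_lr.
- exact: union_far_rl.
- exact: union_connect_components.
- exact: union_connect_core.
Qed.

Lemma configurable_add v1 b1 v2 b2 r k : 2 <= r -> 2 <= k ->
  configurable v1 b1 r k -> configurable v2 b2 r k -> configurable (v1 + v2) (b1 + b2) r k.
Proof.
move=> r2 k2 [[-> ->] | [i1 c1]]; first by rewrite !add0n.
move=> [[-> ->] | [i2 c2]]; first by rewrite !addn0; right; exists i1.
have [v1_0 | v1_gt0] := posnP v1.
  by rewrite v1_0 (configuration_void (ltnW k2) c1 v1_0) !add0n; right; exists i2.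
have [v2_0 | v2_gt0] := posnP v2.
  by rewrite v2_0 (configuration_void (ltnW k2) c2 v2_0) !addn0; right; exists i1.
by right; apply: union_configuration c1 c2.
Qed.

Unset Implicit Arguments.

Theorem lemma6 (r k : nat) : 2 <= r -> 2 <= k ->
  inD r k 0 /\ (forall d d' : nat, inD r k d -> inD r k d' -> inD r k (d + d')).
Proof.
move=> r2 k2; split; first by left; rewrite !mul0n.
by move=> d d'; rewrite /inD !mulnDl; apply: configurable_add.
Qed.
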